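(* Let $M$ be a generic regular closed curve with arc-length parameterization $f$. Then the number of elements of the sequence of division points $\mathcal{S}_M$ is even.
   Context: Generic means $f$ lies in the set $\mathcal{G}$: $f$ is regular with only transversal self-crossings, only non-degenerate inflexion points (curvature changes sign and $\det(f',f''')\ne0$) and no undulation points; at least one point of each parallel pair is not an inflexion point; and further finitely many non-degeneracy conditions on parallel pairs (involving curvature, its first two arc-length derivatives, and collinearity of chords) hold. Two distinct points of $M$ form a parallel pair if their tangent lines are parallel. The sequence of division points $\mathcal{S}_M$: if $M$ has inflexion points, it is the set of all parameters $s$ such that $f(s)$ is an inflexion point or the tangent line at $f(s)$ is parallel to the tangent line at some inflexion point; if $M$ has no inflexion points, it is the set of all $s$ with $f'(s)$ parallel to $f'(s_0)$ for a fixed $s_0$ (including $s_0$); in both cases ordered compatibly with the orientation of $M$. *)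

From Stdlib Require Import Reals Lra List.
From Coquelicot Require Import Coquelicot.
Open Scope R_scope.

(* A plane curve f = (x, y) : R -> R^2, given by its two coordinate functions. *)

Definition smooth (g : R -> R) : Prop :=
  forall (n : nat) (t : R), ex_derive (Derive_n g n) t.

Definition arclength_closed_curve (x y : R -> R) (L : R) : Prop :=
  0 < L /\ smooth x /\ smooth y /\
  (forall s, x (s + L) = x s /\ y (s + L) = y s) /\
  (forall s, (Derive_n x 1 s) ^ 2 + (Derive_n y 1 s) ^ 2 = 1).

Definition detd (x y : R -> R) (i j : nat) (s t : R) : R :=
  Derive_n x i s * Derive_n y j t - Derive_n y i s * Derive_n x j t.

Definition tangent_parallel (x y : R -> R) (s t : R) : Prop :=
  detd x y 1 1 s t = 0.

(* signed curvature (arc-length parameterization): det(f', f'') *)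
Definition curvature (x y : R -> R) (s : R) : R := detd x y 1 2 s s.

Definition changes_sign (k : R -> R) (s : R) : Prop :=
  exists d, 0 < d /\
   ((forall t, s - d < t < s -> k t < 0) /\ (forall t, s < t < s + d -> 0 < k t) \/
    (forall t, s - d < t < s -> 0 < k t) /\ (forall t, s < t < s + d -> k t < 0)).

Definition inflexion (x y : R -> R) (s : R) : Prop :=
  curvature x y s = 0 /\ changes_sign (curvature x y) s.

Definition undulation (x y : R -> R) (s : R) : Prop :=
  curvature x y s = 0 /\ ~ changes_sign (curvature x y) s.

Definition distinct_mod (L s t : R) : Prop :=
  forall k : Z, s <> t + IZR k * L.

(* genericity conditions of the set G that are stated explicitly in the paper *)
Definition generic (x y : R -> R) (L : R) : Prop :=
  arclength_closed_curve x y L /\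
  (forall s t, distinct_mod L s t -> x s = x t -> y s = y t ->
     detd x y 1 1 s t <> 0) /\
  (forall s, inflexion x y s -> detd x y 1 3 s s <> 0) /\
  (forall s, ~ undulation x y s) /\
  (forall s t, distinct_mod L s t -> tangent_parallel x y s t ->
     ~ (inflexion x y s /\ inflexion x y t)).

Definition has_inflexion (x y : R -> R) : Prop := exists s, inflexion x y s.

(* membership in the sequence of division points S_M, with base point s0
   (s0 only matters when M has no inflexion point) *)
Definition division_point (x y : R -> R) (s0 s : R) : Prop :=
  (has_inflexion x y /\
     (inflexion x y s \/ exists t, inflexion x y t /\ tangent_parallel x y s t)) \/
  (~ has_inflexion x y /\ tangent_parallel x y s s0).

From Stdlib Require Import Reals List Arith.
From Stdlib Require Import Lra Lia ZArith Classical.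
From Coquelicot Require Import Coquelicot.
Open Scope R_scope.

(* Every division point is a zero of a periodic function, and on one period the
   number of zeros of such a function plus the number of its zeros without sign
   change is even, since its sign is the same at both ends of the period.
   Without inflexions, S_M is the zero set of s |-> det(f'(s), f'(s0)); all its
   zeros are sign changes because the derivative at a zero c is, up to sign, the
   curvature at c, which never vanishes.  With inflexions, the curvature changes
   sign at each of them, so there is an even number of inflexions.  For an
   inflexion t, s |-> det(f'(s), f'(t)) has a zero without sign change at t
   (first derivative -kappa(t) = 0, second derivative -det(f'(t), f'''(t)) <> 0)
   and sign changes at all other zeros, which are not inflexions; so it has an
   odd number of zeros.  Parallelism of tangents being transitive, these zero
   sets are disjoint for distinct inflexions, and S_M is their union. *)

Definition enumerates {A : Type} (l : list A) (P : A -> Prop) : Prop :=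
  NoDup l /\ forall z, In z l <-> P z.

Lemma enumerates_ext {A : Type} (l : list A) (P Q : A -> Prop) :
  (forall z, P z <-> Q z) -> enumerates l P -> enumerates l Q.
Proof. intros PQ [N M]. split; [exact N|]. intros z. rewrite M. apply PQ. Qed.

Lemma enumerates_empty {A : Type} (l : list A) (P : A -> Prop) :
  (forall z, ~ P z) -> enumerates l P -> l = nil.
Proof.
  intros HP [_ M]. destruct l as [|a l]; [reflexivity|].
  exfalso. apply (HP a), M. now left.
Qed.

Lemma enumerates_singleton {A : Type} (l : list A) (a : A) :
  enumerates l (fun z => z = a) -> length l = 1%nat.
Proof.
  intros [N M]. destruct l as [|b [|c l]]; [|reflexivity|].
  - exfalso. apply (proj2 (M a)). reflexivity.
  - assert (b = a) by (apply M; now left). assert (c = a) by (apply M; right; now left).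
    subst. inversion N as [|? ? Hb]. exfalso. apply Hb. now left.
Qed.

Lemma disjoint_union_parity {A B : Type} (P : A -> B -> Prop) (li : list A) :
  NoDup li ->
  (forall t, In t li -> exists lt, enumerates lt (P t) /\ Nat.even (length lt) = false) ->
  (forall t t' s, In t li -> In t' li -> t <> t' -> P t s -> P t' s -> False) ->
  exists lc, enumerates lc (fun s => exists t, In t li /\ P t s) /\
    Nat.even (length lc) = Nat.even (length li).
Proof.
  induction li as [|t li IH]; intros N Hodd Hdisj.
  - exists nil. split; [|reflexivity]. split; [constructor|].
    intros s. simpl. split; [tauto|]. intros [t [[] _]].
  - inversion N as [|? ? Ht Nli]; subst.
    destruct IH as [lc [[Nc Mc] Pc]]; auto.
    { intros t' Ht'. apply Hodd. now right. }
    { intros t1 t2 s H1 H2. apply Hdisj; now right. }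
    destruct (Hodd t (or_introl eq_refl)) as [lt [[Nt Mt] Pt]].
    exists (lt ++ lc). split; [split|].
    + apply NoDup_app; auto. intros s Hs Hs'. apply Mt in Hs. apply Mc in Hs'.
      destruct Hs' as [t' [Ht' Hp]]. apply (Hdisj t t' s); auto; [now left|now right|].
      intros <-. contradiction.
    + intros s. rewrite in_app_iff, Mc, Mt. split.
      * intros [Hs|[t' [Ht' Hs]]]; [exists t; split; [now left|exact Hs]|].
        exists t'. split; [now right|exact Hs].
      * intros [t' [[<-|Ht'] Hs]]; [now left|right; now exists t'].
    + rewrite length_app, Nat.even_add, Pt, Pc. simpl length.
      rewrite Nat.even_succ, <- Nat.negb_even. now destruct (Nat.even (length li)).
Qed.

Lemma enumerates_interval_extend (P : R -> Prop) (l : list R) (a b t : R) :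
  b <= t -> (forall z, b <= z < t -> ~ P z) ->
  enumerates l (fun z => a <= z < b /\ P z) -> enumerates l (fun z => a <= z < t /\ P z).
Proof.
  intros bt HP. apply enumerates_ext. intros z. split.
  - intros [Hz Pz]. split; [lra|exact Pz].
  - intros [Hz Pz]. split; [|exact Pz].
    destruct (Rlt_le_dec z b); [lra|]. exfalso. apply (HP z); [lra|exact Pz].
Qed.

Lemma enumerates_interval_cons (P : R -> Prop) (l : list R) (a b t : R) :
  a <= b < t -> P b -> (forall z, b < z < t -> ~ P z) ->
  enumerates l (fun z => a <= z < b /\ P z) -> enumerates (b :: l) (fun z => a <= z < t /\ P z).
Proof.
  intros Hb Pb HP [N M]. split.
  - constructor; [|exact N]. intros Hin. apply M in Hin. lra.
  - intros z. simpl. rewrite M. split.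
    + intros [<-|[Hz Pz]]; split; auto; lra.
    + intros [Hz Pz]. destruct (Rlt_le_dec z b) as [|Hbz]; [right; split; auto; lra|].
      destruct (Rle_lt_or_eq_dec _ _ Hbz) as [Hlt|<-]; [|now left].
      exfalso. apply (HP z); [lra|exact Pz].
Qed.

Lemma real_induction (a : R) (P : R -> Prop) :
  P a ->
  (forall c, a <= c -> P c -> exists d, 0 < d /\ forall t, c < t < c + d -> P t) ->
  (forall c, a < c -> (forall t, a <= t < c -> P t) -> P c) ->
  forall c, a <= c -> P c.
Proof.
  intros Ha Hstep Hlim c0 Hc0.
  destruct (classic (P c0)) as [|Hn]; [assumption|exfalso].
  set (E := fun m => a <= m <= c0 /\ forall t, a <= t <= m -> P t).
  assert (Pa : forall t, a <= t <= a -> P t) by (intros t Ht; now replace t with a by lra).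
  destruct (completeness E) as [m [Hub Hlub]].
  { exists c0. intros m [Hm _]. lra. }
  { exists a. split; [lra|exact Pa]. }
  assert (am : a <= m) by (apply Hub; split; [lra|exact Pa]).
  assert (mc : m <= c0) by (apply Hlub; intros z [Hz _]; lra).
  assert (below : forall t, a <= t < m -> P t).
  { intros t Ht. destruct (classic (exists e, E e /\ t < e)) as [[e [[_ He] Hte]]|Hne].
    - apply He. lra.
    - assert (m <= t); [|lra]. apply Hlub. intros z Hz.
      destruct (Rle_lt_dec z t); [assumption|]. exfalso. apply Hne. now exists z. }
  assert (Pm : P m).
  { destruct (Rle_lt_or_eq_dec a m am) as [Hlt|<-]; [now apply Hlim|exact Ha]. }
  destruct (Rle_lt_or_eq_dec m c0 mc) as [Hlt|<-]; [|contradiction].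
  destruct (Hstep m am Pm) as [d [Hd Hright]].
  set (m' := Rmin (m + d / 2) c0).
  assert (m'1 : m' <= m + d / 2) by apply Rmin_l.
  assert (m'2 : m' <= c0) by apply Rmin_r.
  assert (m'3 : m < m') by (apply Rmin_glb_lt; lra).
  assert (E m'); [|pose proof (Hub m' H); lra].
  split; [lra|]. intros t Ht.
  destruct (Rlt_le_dec t m); [apply below; lra|].
  destruct (Rle_lt_or_eq_dec m t r) as [|<-]; [apply Hright; lra|exact Pm].
Qed.

Definition has_sign (b : bool) (v : R) : Prop := if b then 0 < v else v < 0.

Lemma has_sign_uniq b1 b2 v : has_sign b1 v -> has_sign b2 v -> b1 = b2.
Proof. destruct b1, b2; simpl; intros; auto; lra. Qed.

Lemma has_sign_neq0 b v : has_sign b v -> v <> 0.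
Proof. destruct b; simpl; lra. Qed.

Section OneSidedSigns.
Variable g : R -> R.

Definition sign_left (c : R) (b : bool) : Prop :=
  exists d, 0 < d /\ forall t, c - d < t < c -> has_sign b (g t).

Definition sign_right (c : R) (b : bool) : Prop :=
  exists d, 0 < d /\ forall t, c < t < c + d -> has_sign b (g t).

Definition sign_change (c : R) : Prop :=
  exists bl br, sign_left c bl /\ sign_right c br /\ bl <> br.

Definition touching_zero (c : R) : Prop :=
  g c = 0 /\ exists b, sign_left c b /\ sign_right c b.

Definition locally_signed : Prop :=
  forall c, exists bl br, sign_left c bl /\ sign_right c br /\ (g c <> 0 -> bl = br).

Lemma sign_left_uniq c b1 b2 : sign_left c b1 -> sign_left c b2 -> b1 = b2.
Proof.
  intros [d1 [H1 K1]] [d2 [H2 K2]].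
  pose proof (Rmin_pos d1 d2 H1 H2). pose proof (Rmin_l d1 d2). pose proof (Rmin_r d1 d2).
  apply (has_sign_uniq _ _ (g (c - Rmin d1 d2 / 2))); [apply K1|apply K2]; lra.
Qed.

Lemma sign_right_uniq c b1 b2 : sign_right c b1 -> sign_right c b2 -> b1 = b2.
Proof.
  intros [d1 [H1 K1]] [d2 [H2 K2]].
  pose proof (Rmin_pos d1 d2 H1 H2). pose proof (Rmin_l d1 d2). pose proof (Rmin_r d1 d2).
  apply (has_sign_uniq _ _ (g (c + Rmin d1 d2 / 2))); [apply K1|apply K2]; lra.
Qed.

Lemma sign_left_of_interval c t b :
  c < t -> (forall z, c < z < t -> has_sign b (g z)) -> sign_left t b.
Proof. intros ct K. exists (t - c). split; [lra|]. intros z Hz. apply K. lra. Qed.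

Lemma sign_change_not_touching c : sign_change c -> ~ touching_zero c.
Proof.
  intros [bl [br [Hl [Hr Hne]]]] [_ [b [Hl' Hr']]]. apply Hne.
  now rewrite (sign_left_uniq _ _ _ Hl Hl'), (sign_right_uniq _ _ _ Hr Hr').
Qed.

(* Crossing zeros are counted once and touching zeros twice, so the parity
   records whether the sign of [g] differs just before [a] and just before [b]. *)
Definition zero_parity_upto (a b : R) : Prop :=
  exists l lk, enumerates l (fun z => a <= z < b /\ g z = 0) /\
    enumerates lk (fun z => a <= z < b /\ touching_zero z) /\
    forall sa sb, sign_left a sa -> sign_left b sb ->
      Nat.even (length l + length lk) = Bool.eqb sa sb.

Lemma zero_parity_refl a : zero_parity_upto a a.
Proof.
  exists nil, nil. split; [|split].
  - split; [constructor|]. intros z. simpl. lra.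
  - split; [constructor|]. intros z. simpl. lra.
  - intros sa sb Ha Hb. rewrite (sign_left_uniq _ _ _ Ha Hb). now destruct sb.
Qed.

Lemma zero_parity_no_zeros a c t b :
  a <= c <= t -> (forall z, c <= z < t -> g z <> 0) ->
  sign_left c b -> sign_left t b -> zero_parity_upto a c -> zero_parity_upto a t.
Proof.
  intros Hct Hnz Hc Ht [l [lk [Hl [Hlk Par]]]].
  exists l, lk. split; [|split].
  - apply (enumerates_interval_extend _ _ _ c); [lra|exact Hnz|exact Hl].
  - apply (enumerates_interval_extend _ _ _ c); [lra| |exact Hlk].
    intros z Hz [Hzero _]. now apply (Hnz z).
  - intros sa sb Ha Hb. rewrite <- (sign_left_uniq _ _ _ Ht Hb). now apply Par.
Qed.

Lemma zero_parity_at_zero a c t bl br :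
  a <= c < t -> g c = 0 -> sign_left c bl -> (forall z, c < z < t -> has_sign br (g z)) ->
  zero_parity_upto a c -> zero_parity_upto a t.
Proof.
  intros Hct Hz Hl K [l [lk [Hzeros [Htouch Par]]]].
  assert (Hr : sign_right c br) by (exists (t - c); split; [lra|intros z Hz'; apply K; lra]).
  assert (Hnz : forall z, c < z < t -> g z <> 0) by (intros z Hz'; exact (has_sign_neq0 _ _ (K z Hz'))).
  assert (Hlt : sign_left t br) by (apply (sign_left_of_interval c); [lra|exact K]).
  assert (Hzeros' : enumerates (c :: l) (fun z => a <= z < t /\ g z = 0))
    by (apply enumerates_interval_cons; auto).
  assert (Hno : forall z, c < z < t -> ~ touching_zero z) by (intros z Hz' [H0 _]; now apply (Hnz z)).
  destruct (Bool.bool_dec bl br) as [<-|Hne].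
  - exists (c :: l), (c :: lk). split; [exact Hzeros'|split].
    + apply enumerates_interval_cons; auto. split; [exact Hz|now exists bl].
    + intros sa sb Ha Hb. rewrite <- (sign_left_uniq _ _ _ Hlt Hb), <- (Par sa bl Ha Hl).
      simpl length. now rewrite Nat.add_succ_l, Nat.add_succ_r.
  - exists (c :: l), lk. split; [exact Hzeros'|split].
    + apply (enumerates_interval_extend _ _ _ c); [lra| |exact Htouch].
      intros z Hz' Htz. destruct (Rle_lt_or_eq_dec _ _ (proj1 Hz')) as [Hlt'|<-].
      * apply (Hno z); [lra|exact Htz].
      * apply (sign_change_not_touching c); [|exact Htz]. now exists bl, br.
    + intros sa sb Ha Hb. rewrite <- (sign_left_uniq _ _ _ Hlt Hb).
      simpl length. rewrite Nat.add_succ_l, Nat.even_succ, <- Nat.negb_even, (Par sa bl Ha Hl).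
      destruct sa, bl, br; simpl; congruence.
Qed.

Lemma zero_parity_step_right a c :
  locally_signed -> a <= c -> zero_parity_upto a c ->
  exists d, 0 < d /\ forall t, c < t < c + d -> zero_parity_upto a t.
Proof.
  intros LS ac Hc. destruct (LS c) as [bl [br [Hl [[d [Hd K]] Hsame]]]].
  exists d. split; [exact Hd|]. intros t Ht.
  assert (Kt : forall z, c < z < t -> has_sign br (g z)) by (intros z Hz; apply K; lra).
  destruct (classic (g c = 0)) as [Hz|Hz].
  - apply (zero_parity_at_zero a c t bl br); auto. lra.
  - apply (zero_parity_no_zeros a c t br); auto; [lra| |now rewrite <- Hsame|].
    + intros z Hz'. destruct (Rle_lt_or_eq_dec _ _ (proj1 Hz')) as [Hlt|<-]; [|exact Hz].
      exact (has_sign_neq0 _ _ (Kt z (conj Hlt (proj2 Hz')))).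
    + apply (sign_left_of_interval c); [lra|exact Kt].
Qed.

Lemma zero_parity_limit_left a c :
  locally_signed -> a < c -> (forall t, a <= t < c -> zero_parity_upto a t) ->
  zero_parity_upto a c.
Proof.
  intros LS ac IH. destruct (LS c) as [bl [_ [[d [Hd K]] _]]].
  set (t := Rmax a (c - d / 2)).
  assert (Hat : a <= t) by apply Rmax_l.
  assert (Hdt : c - d / 2 <= t) by apply Rmax_r.
  assert (Htc : t < c) by (apply Rmax_lub_lt; lra).
  apply (zero_parity_no_zeros a t c bl); [lra| | |now exists d|apply IH; lra].
  - intros z Hz. apply (has_sign_neq0 bl), K. lra.
  - apply (sign_left_of_interval (c - d)); [lra|]. intros z Hz. apply K. lra.
Qed.

Lemma zeros_parity a b : locally_signed -> a <= b -> zero_parity_upto a b.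
Proof.
  intros LS. apply real_induction.
  - apply zero_parity_refl.
  - intros c ac. now apply zero_parity_step_right.
  - intros c ac. now apply zero_parity_limit_left.
Qed.

Lemma periodic_zero_parity L :
  0 < L -> (forall s, g (s + L) = g s) -> locally_signed ->
  exists l lk, enumerates l (fun z => 0 <= z < L /\ g z = 0) /\
    enumerates lk (fun z => 0 <= z < L /\ touching_zero z) /\
    Nat.even (length l + length lk) = true.
Proof.
  intros HL Hper LS.
  destruct (zeros_parity 0 L LS ltac:(lra)) as [l [lk [Hl [Hlk Par]]]].
  exists l, lk. split; [exact Hl|split; [exact Hlk|]].
  destruct (LS 0) as [b [_ [[d [Hd K]] _]]].
  assert (HLb : sign_left L b).
  { exists d. split; [exact Hd|]. intros t Ht.
    replace t with ((t - L) + L) by ring. rewrite Hper. apply K. lra. }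
  rewrite (Par b b); [now destruct b|now exists d|exact HLb].
Qed.

Lemma sign_near_nonzero c : continuity_pt g c -> g c <> 0 -> exists b, sign_left c b /\ sign_right c b.
Proof.
  intros Hc Hn.
  destruct (Hc (Rabs (g c)) (Rabs_pos_lt _ Hn)) as [d [Hd K]].
  assert (K' : forall t, c - d < t < c + d -> Rabs (g t - g c) < Rabs (g c)).
  { intros t Ht. destruct (Req_dec t c) as [->|Htc].
    - rewrite Rminus_diag, Rabs_R0. now apply Rabs_pos_lt.
    - apply K. split; [split; [exact I|congruence]|]. simpl. unfold R_dist. apply Rabs_def1; lra. }
  destruct (Rlt_le_dec 0 (g c)) as [Hp|Hp]; [exists true|exists false];
    split; exists d; split; auto; intros t Ht; simpl;
    specialize (K' t ltac:(lra)); [rewrite (Rabs_right (g c)) in K' by lra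
    | rewrite (Rabs_right (g c)) in K' by lra
    | rewrite (Rabs_left (g c)) in K' by lra
    | rewrite (Rabs_left (g c)) in K' by lra]; apply Rabs_def2 in K'; lra.
Qed.

Lemma locally_signed_intro :
  (forall c, continuity_pt g c) -> (forall c, g c = 0 -> sign_change c \/ touching_zero c) ->
  locally_signed.
Proof.
  intros Hc Hz c. destruct (classic (g c = 0)) as [E|E].
  - destruct (Hz c E) as [[bl [br [Hl [Hr _]]]]|[_ [b [Hl Hr]]]];
      [exists bl, br|exists b, b]; repeat split; auto; contradiction.
  - destruct (sign_near_nonzero c (Hc c) E) as [b [Hl Hr]]. now exists b, b.
Qed.

Lemma simple_zero_sign_change c l : is_derive g c l -> g c = 0 -> l <> 0 -> sign_change c.
Proof.
  intros Hd Hz Hl. apply is_derive_Reals in Hd.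
  destruct (Hd (Rabs l / 2)) as [[d Hdpos] K]; [pose proof (Rabs_pos_lt l Hl); lra|]. simpl in K.
  assert (key : forall t : R, t <> c -> c - d < t < c + d -> 0 < g t * l * (t - c)).
  { intros t Htc Ht.
    assert (Hq := K (t - c) ltac:(lra) ltac:(apply Rabs_def1; lra)).
    replace (c + (t - c)) with t in Hq by ring. rewrite Hz, Rminus_0_r in Hq.
    set (q := g t / (t - c)) in Hq.
    replace (g t * l * (t - c)) with (q * l * (t - c) ^ 2) by (unfold q; field; lra).
    apply Rmult_lt_0_compat; [|apply pow2_gt_0; lra].
    destruct (Rle_lt_dec 0 l);
      [rewrite (Rabs_right l) in Hq by lra|rewrite (Rabs_left l) in Hq by lra];
      apply Rabs_def2 in Hq; nra. }
  assert (left_of : forall t, c - d < t < c -> g t * l < 0).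
  { intros t Ht. specialize (key t ltac:(intros ->; lra) ltac:(lra)). nra. }
  assert (right_of : forall t, c < t < c + d -> 0 < g t * l).
  { intros t Ht. specialize (key t ltac:(intros ->; lra) ltac:(lra)). nra. }
  destruct (Rdichotomy _ _ Hl); [exists true, false|exists false, true];
    (split; [|split; [|discriminate]]); exists d; split; auto; intros t Ht; simpl;
    [specialize (left_of t Ht)|specialize (right_of t Ht)|specialize (left_of t Ht)|specialize (right_of t Ht)];
    nra.
Qed.

End OneSidedSigns.

Lemma double_zero_touching g g1 c l :
  (forall s, is_derive g s (g1 s)) -> is_derive g1 c l ->
  g c = 0 -> g1 c = 0 -> l <> 0 -> touching_zero g c.
Proof.
  intros Hg Hg1 Hz Hz1 Hl.
  destruct (simple_zero_sign_change g1 c l Hg1 Hz1 Hl)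
    as [bl [br [[d1 [Hd1 K1]] [[d2 [Hd2 K2]] Hne]]]].
  assert (Dg : forall s, derivable_pt_lim g s (g1 s)) by (intros s; apply is_derive_Reals, Hg).
  split; [exact Hz|]. exists br. split.
  - exists d1. split; [exact Hd1|]. intros t Ht.
    destruct (MVT_cor2 g g1 t c) as [xi [E Hxi]]; [lra|intros; apply Dg|].
    specialize (K1 xi ltac:(lra)). rewrite Hz in E.
    destruct bl, br; simpl in *; try congruence; nra.
  - exists d2. split; [exact Hd2|]. intros t Ht.
    destruct (MVT_cor2 g g1 c t) as [xi [E Hxi]]; [lra|intros; apply Dg|].
    specialize (K2 xi ltac:(lra)). rewrite Hz in E.
    destruct br; simpl in *; nra.
Qed.

Lemma periodic_sign_changes_even g L :
  0 < L -> (forall s, g (s + L) = g s) -> (forall c, continuity_pt g c) ->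
  (forall c, g c = 0 -> sign_change g c) ->
  exists l, enumerates l (fun z => 0 <= z < L /\ g z = 0) /\ Nat.even (length l) = true.
Proof.
  intros HL Hper Hc Hz.
  destruct (periodic_zero_parity g L HL Hper) as [l [lk [Hl [Hlk Par]]]].
  { apply locally_signed_intro; [exact Hc|]. intros c Hc0. left. now apply Hz. }
  exists l. split; [exact Hl|].
  assert (Hnil : lk = nil).
  { refine (enumerates_empty lk _ _ Hlk). intros z [_ Htz].
    exact (sign_change_not_touching g z (Hz z (proj1 Htz)) Htz). }
  rewrite Hnil in Par.
  now rewrite Nat.add_0_r in Par.
Qed.

Lemma changes_sign_sign_change (k : R -> R) (s : R) : changes_sign k s -> sign_change k s.
Proof.
  intros [d [Hd [[Kl Kr]|[Kl Kr]]]]; [exists false, true|exists true, false];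
    repeat split; try discriminate; exists d; split; auto.
Qed.

Lemma smooth_is_derive (f : R -> R) (n : nat) (s : R) : smooth f -> is_derive (Derive_n f n) s (Derive_n f (S n) s).
Proof. intros Hf. exact (Derive_correct _ _ (Hf n s)). Qed.

Lemma is_derive_continuity_pt (f : R -> R) (s l : R) : is_derive f s l -> continuity_pt f s.
Proof. intros H. apply derivable_continuous_pt. exists l. now apply is_derive_Reals. Qed.

Lemma periodic_Z (f : R -> R) (L : R) : (forall s, f (s + L) = f s) -> forall k s, f (s + IZR k * L) = f s.
Proof.
  intros Hp.
  assert (Hn : forall n s, f (s + INR n * L) = f s).
  { induction n as [|n IH]; intros s; [simpl; now rewrite Rmult_0_l, Rplus_0_r|].
    rewrite S_INR. replace (s + (INR n + 1) * L) with ((s + INR n * L) + L) by ring.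
    now rewrite Hp. }
  intros k s. destruct (Z.le_gt_cases 0 k) as [Hk|Hk].
  - replace k with (Z.of_nat (Z.to_nat k)) by lia. rewrite <- INR_IZR_INZ. apply Hn.
  - replace k with (- Z.of_nat (Z.to_nat (- k)))%Z by lia. rewrite opp_IZR, <- INR_IZR_INZ.
    rewrite <- (Hn (Z.to_nat (- k)) (s + - INR (Z.to_nat (- k)) * L)). f_equal. ring.
Qed.

Lemma Derive_n_shift (f : R -> R) (L : R) (n : nat) (k : Z) (s : R) :
  (forall s, f (s + L) = f s) -> Derive_n f n (s + IZR k * L) = Derive_n f n s.
Proof.
  intros Hp. apply (periodic_Z (Derive_n f n) L). intros u.
  rewrite <- Derive_n_comp_trans. apply Derive_n_ext. intros v. apply Hp.
Qed.

Lemma shift_into_period L t : 0 < L -> exists k, 0 <= t + IZR k * L < L.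
Proof.
  intros HL. destruct (archimed (t / L)) as [A B].
  exists (1 - up (t / L))%Z. rewrite minus_IZR.
  assert (t = t / L * L) by (field; lra).
  split; nra.
Qed.

Lemma distinct_mod_period L s t :
  0 < L -> 0 <= s < L -> 0 <= t < L -> s <> t -> distinct_mod L s t.
Proof.
  intros HL Hs Ht Hne k E.
  destruct (Z.lt_trichotomy k 0) as [Hk|[->|Hk]].
  - assert (IZR k <= -1) by (apply IZR_le; lia). nra.
  - apply Hne. rewrite E. simpl. ring.
  - assert (1 <= IZR k) by (apply IZR_le; lia). nra.
Qed.

Lemma det_parallel_trans a b c d p q :
  c ^ 2 + d ^ 2 = 1 -> a * d - b * c = 0 -> p * d - q * c = 0 -> a * q - b * p = 0.
Proof.
  intros Hv Hu Hw.
  assert (E : (a * q - b * p) * (c ^ 2 + d ^ 2)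
              = (a * d - b * c) * (p * c + q * d) - (p * d - q * c) * (a * c + b * d)) by ring.
  rewrite Hv, Hu, Hw in E. lra.
Qed.

Section GenericCurve.
Variables (x y : R -> R) (L : R).
Hypothesis HG : generic x y L.

Lemma period_pos : 0 < L.
Proof. now destruct HG as [[HL _] _]. Qed.

Lemma detd_is_derive i j t s : is_derive (fun u => detd x y i j u t) s (detd x y (S i) j s t).
Proof.
  destruct HG as [[_ [Sx [Sy _]]] _]. unfold detd.
  apply (is_derive_minus (fun u => Derive_n x i u * Derive_n y j t)
                         (fun u => Derive_n y i u * Derive_n x j t));
    [apply (is_derive_scal_l (Derive_n x i) s _ (Derive_n y j t))
    |apply (is_derive_scal_l (Derive_n y i) s _ (Derive_n x j t))];
    now apply smooth_is_derive.
Qed.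

Lemma detd_shift_l i j k s t : detd x y i j (s + IZR k * L) t = detd x y i j s t.
Proof.
  destruct HG as [[_ [_ [_ [Hper _]]]] _]. unfold detd.
  rewrite !(Derive_n_shift _ L); auto; apply Hper.
Qed.

Lemma detd_shift_r i j k s t : detd x y i j s (t + IZR k * L) = detd x y i j s t.
Proof.
  destruct HG as [[_ [_ [_ [Hper _]]]] _]. unfold detd.
  rewrite !(Derive_n_shift _ L); auto; apply Hper.
Qed.

Lemma detd_period_l i j s t : detd x y i j (s + L) t = detd x y i j s t.
Proof. replace (s + L) with (s + IZR 1 * L) by (simpl; ring). apply detd_shift_l. Qed.

Lemma curvature_shift k s : curvature x y (s + IZR k * L) = curvature x y s.
Proof. unfold curvature. now rewrite detd_shift_l, detd_shift_r. Qed.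

Lemma curvature_continuity_pt s : continuity_pt (curvature x y) s.
Proof.
  destruct HG as [[_ [Sx [Sy _]]] _].
  assert (C : forall f n, smooth f -> continuity_pt (Derive_n f n) s)
    by (intros f n Hf; exact (is_derive_continuity_pt _ _ _ (smooth_is_derive f n s Hf))).
  unfold curvature, detd.
  apply (continuity_pt_minus (fun u => Derive_n x 1 u * Derive_n y 2 u)
                             (fun u => Derive_n y 1 u * Derive_n x 2 u));
    apply continuity_pt_mult; auto.
Qed.

Lemma inflexion_iff_curvature_zero s : inflexion x y s <-> curvature x y s = 0.
Proof.
  destruct HG as [_ [_ [_ [Hund _]]]]. split; [now intros [Hk _]|].
  intros Hk. split; [exact Hk|]. apply NNPP. intros Hn. now apply (Hund s).
Qed.

Lemma inflexion_shift k t : inflexion x y t -> inflexion x y (t + IZR k * L).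
Proof. rewrite !inflexion_iff_curvature_zero. now rewrite curvature_shift. Qed.

Lemma parallel_curvature_zero c t :
  tangent_parallel x y c t -> detd x y 2 1 c t = 0 -> curvature x y c = 0.
Proof.
  destruct HG as [[_ [_ [_ [_ Hunit]]]] _]. unfold tangent_parallel, curvature, detd.
  intros Hp Hd. apply (det_parallel_trans _ _ (Derive_n x 1 t) (Derive_n y 1 t)); auto.
Qed.

Lemma tangent_parallel_trans s t t' :
  tangent_parallel x y s t -> tangent_parallel x y s t' -> tangent_parallel x y t t'.
Proof.
  destruct HG as [[_ [_ [_ [_ Hunit]]]] _]. unfold tangent_parallel, detd.
  intros Ht Ht'. apply (det_parallel_trans _ _ (Derive_n x 1 s) (Derive_n y 1 s)); auto; lra.
Qed.

Lemma parallel_sign_change t c :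
  tangent_parallel x y c t -> curvature x y c <> 0 ->
  sign_change (fun s => detd x y 1 1 s t) c.
Proof.
  intros Hp Hk. apply (simple_zero_sign_change _ _ _ (detd_is_derive 1 1 t c)); [exact Hp|].
  intros Hd. apply Hk. now apply (parallel_curvature_zero c t).
Qed.

Lemma no_inflexion_parallels_even s0 :
  ~ has_inflexion x y ->
  exists l, enumerates l (fun s => 0 <= s < L /\ tangent_parallel x y s s0) /\
    Nat.even (length l) = true.
Proof.
  intros Hni. apply (periodic_sign_changes_even (fun s => detd x y 1 1 s s0)).
  - exact period_pos.
  - intros s. apply detd_period_l.
  - intros c. exact (is_derive_continuity_pt _ _ _ (detd_is_derive 1 1 s0 c)).
  - intros c Hc. apply parallel_sign_change; [exact Hc|].
    intros Hk. apply Hni. exists c. now apply inflexion_iff_curvature_zero.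
Qed.

Lemma inflexions_even :
  exists li, enumerates li (fun t => 0 <= t < L /\ inflexion x y t) /\
    Nat.even (length li) = true.
Proof.
  destruct (periodic_sign_changes_even (curvature x y) L) as [li [Hli Par]].
  - exact period_pos.
  - intros s. replace (s + L) with (s + IZR 1 * L) by (simpl; ring). apply curvature_shift.
  - exact curvature_continuity_pt.
  - intros c Hc. apply changes_sign_sign_change. now apply inflexion_iff_curvature_zero.
  - exists li. split; [|exact Par]. revert Hli. apply enumerates_ext.
    intros z. now rewrite inflexion_iff_curvature_zero.
Qed.

Lemma inflexion_parallel_touching t k :
  inflexion x y t -> touching_zero (fun s => detd x y 1 1 s t) (t + IZR k * L).
Proof.
  destruct HG as [_ [_ [Hnd _]]]. intros Ht.
  apply (double_zero_touching (fun s => detd x y 1 1 s t) (fun s => detd x y 2 1 s t)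
           (t + IZR k * L) (detd x y 3 1 (t + IZR k * L) t)).
  - intros s. apply detd_is_derive.
  - apply detd_is_derive.
  - rewrite detd_shift_l. unfold detd. apply Rminus_diag_eq, Rmult_comm.
  - rewrite detd_shift_l. destruct Ht as [Hk _]. unfold curvature, detd in *. lra.
  - rewrite detd_shift_l. intros H3. apply (Hnd t Ht). unfold detd in *. lra.
Qed.

Lemma other_parallel_sign_change t c :
  inflexion x y t -> distinct_mod L c t -> tangent_parallel x y c t ->
  sign_change (fun s => detd x y 1 1 s t) c.
Proof.
  destruct HG as [_ [_ [_ [_ Hpairs]]]]. intros Ht Hd Hp.
  apply parallel_sign_change; [exact Hp|]. intros Hk.
  apply (Hpairs c t Hd Hp). split; [now apply inflexion_iff_curvature_zero|exact Ht].
Qed.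

Lemma inflexion_parallels_odd t :
  0 <= t < L -> inflexion x y t ->
  exists l, enumerates l (fun s => 0 <= s < L /\ tangent_parallel x y s t) /\
    Nat.even (length l) = false.
Proof.
  intros Ht Hinf. set (g := fun s => detd x y 1 1 s t).
  destruct (periodic_zero_parity g L period_pos) as [l [lk [Hl [Hlk Par]]]].
  - intros s. apply detd_period_l.
  - apply locally_signed_intro.
    + intros c. exact (is_derive_continuity_pt _ _ _ (detd_is_derive 1 1 t c)).
    + intros c Hc. destruct (classic (distinct_mod L c t)) as [Hd|Hnd].
      * left. now apply other_parallel_sign_change.
      * right. apply not_all_not_ex in Hnd as [k Hk]. subst c.
        now apply inflexion_parallel_touching.
  - assert (Hone : length lk = 1%nat).
    { apply (enumerates_singleton _ t). revert Hlk. apply enumerates_ext. intros z. split.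
      - intros [Hz Htz]. destruct (Req_dec z t) as [|Hne]; [assumption|exfalso].
        apply (sign_change_not_touching g z); [|exact Htz].
        apply other_parallel_sign_change; [exact Hinf| |exact (proj1 Htz)].
        now apply distinct_mod_period; [exact period_pos| | |].
      - intros ->. split; [exact Ht|].
        pose proof (inflexion_parallel_touching t 0 Hinf) as H0.
        now replace (t + IZR 0 * L) with t in H0 by (simpl; ring). }
    rewrite Hone, Nat.add_1_r, Nat.even_succ, <- Nat.negb_even in Par.
    exists l. split; [exact Hl|]. now destruct (Nat.even (length l)).
Qed.

Lemma inflexion_parallels_disjoint t t' s :
  0 <= t < L -> 0 <= t' < L -> t <> t' -> inflexion x y t -> inflexion x y t' ->
  tangent_parallel x y s t -> tangent_parallel x y s t' -> False.
Proof.
  destruct HG as [_ [_ [_ [_ Hpairs]]]]. intros Ht Ht' Hne Hi Hi' Hp Hp'.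
  apply (Hpairs t t').
  - exact (distinct_mod_period L t t' period_pos Ht Ht' Hne).
  - exact (tangent_parallel_trans s t t' Hp Hp').
  - now split.
Qed.

Lemma division_point_inflexion_iff s0 s :
  has_inflexion x y ->
  (0 <= s < L /\ division_point x y s0 s) <->
  exists t, (0 <= t < L /\ inflexion x y t) /\ (0 <= s < L /\ tangent_parallel x y s t).
Proof.
  intros Hi. split.
  - intros [Hs [[_ [Hinf|[t [Ht Hp]]]]|[Hni _]]]; [| |contradiction].
    + exists s. split; [now split|split; [exact Hs|]]. unfold tangent_parallel, detd. ring.
    + destruct (shift_into_period L t period_pos) as [k Hk].
      exists (t + IZR k * L). split; [split; [exact Hk|now apply inflexion_shift]|].
      split; [exact Hs|]. unfold tangent_parallel. now rewrite detd_shift_r.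
  - intros [t [[_ Ht] [Hs Hp]]]. split; [exact Hs|]. left. split; [exact Hi|]. right. now exists t.
Qed.

End GenericCurve.

Theorem corollary3p9 (x y : R -> R) (L : R) (s0 : R) :
  generic x y L ->
  exists l : list R,
    NoDup l /\
    (forall s, In s l <-> (0 <= s < L /\ division_point x y s0 s)) /\
    Nat.Even (length l).
Proof.
  intros HG. destruct (classic (has_inflexion x y)) as [Hi|Hni].
  - destruct (inflexions_even x y L HG) as [li [[Nli Mli] Pli]].
    destruct (disjoint_union_parity (fun t s => 0 <= s < L /\ tangent_parallel x y s t) li Nli)
      as [lc [[Nc Mc] Pc]].
    + intros t Ht. apply Mli in Ht. now apply inflexion_parallels_odd.
    + intros t t' s Ht Ht' Hne [_ Hp] [_ Hp']. apply Mli in Ht, Ht'.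
      now apply (inflexion_parallels_disjoint x y L HG t t' s).
    + exists lc. split; [exact Nc|split].
      * intros s. rewrite Mc, (division_point_inflexion_iff x y L HG s0 s Hi).
        split; intros [t [Ht Hs]]; exists t; split; [now apply Mli|exact Hs|now apply Mli|exact Hs].
      * apply Nat.even_spec. congruence.
  - destruct (no_inflexion_parallels_even x y L HG s0 Hni) as [l [[N M] P]].
    exists l. split; [exact N|split; [|now apply Nat.even_spec]].
    intros s. rewrite M. unfold division_point. tauto.
Qed.
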